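(* Let $m\ge1$, let $r$ be a rational number with $0\le r<1$, let $k$ be an integer with $1\le k\le m$, and let $\Lambda$ be an antichain in $\mathbb{B}(2m)$ with $\lfloor r k\rfloor+1\le\min_{\lambda\in\Lambda}\rho(\lambda)$. Let $D_0$ be the set of minimal elements (with respect to inclusion) of the family $\bigcup_{\lambda\in\Lambda}\{d\in\mathbb{B}(2m): d\subseteq\lambda,\ \rho(d)=\rho(\lambda)-\lfloor rk\rfloor\}$. For $D\subseteq D_0$ write $W_D=\bigvee_{d\in D}d$. Then \[ \bigl|\mathring{\mathbf{I}}_{r,k}(\mathbb{B}(2m),\Lambda)\bigr|=\binom{m}{k}2^k+\sum_{\substack{D\subseteq D_0\\ |D|>0}}(-1)^{|D|}\sum_{j=0}^{k}\binom{\rho(W_D\vee -W_D)-\rho(W_D)}{j}\binom{m-\tfrac12\rho(W_D\vee-W_D)}{k-j}2^{k-j}. \]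
   Context: For a positive integer $m$, $\pm[1,m]=\{-m,\dots,-1,1,\dots,m\}$. $\mathbb{B}(2m)$ is the Boolean lattice of all subsets of $\pm[1,m]$, with meet $\wedge=\cap$, join $\vee=\cup$, least element $\hat0=\emptyset$, and rank $\rho(b)=|b|$. For $b\in\mathbb{B}(2m)$, $-b=\{-x: x\in b\}$. For $r$, $k$, $\Lambda$ as in the claim, $\mathring{\mathbf{I}}_{r,k}(\mathbb{B}(2m),\Lambda)=\{b\in\mathbb{B}(2m): \rho(b)=k,\ b\wedge -b=\hat0,\ \rho(b\wedge\lambda)>r\cdot k\ \text{for all }\lambda\in\Lambda\}$ (the relatively $r$-blocking $k$-elements for $\Lambda$ containing no pair $\{x,-x\}$). Binomial coefficients $\binom{n}{j}$ are $0$ when $j>n$ or $j<0$. *)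

From HB Require Import structures.
From mathcomp Require Import all_boot all_order all_algebra.
Set Implicit Arguments. Unset Strict Implicit. Unset Printing Implicit Defensive.
Import Order.TTheory GRing.Theory Num.Theory.
Local Open Scope ring_scope.

(* The ground set +-[1,m]: the element (i, s) stands for  (i+1) if s = true,
   and -(i+1) if s = false. *)
Definition pm (m : nat) : finType := ('I_m * bool)%type.

Definition negpm (m : nat) (x : pm m) : pm m := (x.1, ~~ x.2).

Definition negset (m : nat) (b : {set pm m}) : {set pm m} := negpm (m:=m) @: b.

Definition antichain (m : nat) (L : {set {set pm m}}) : Prop :=
  forall a b, a \in L -> b \in L -> a \subset b -> a = b.

Definition flrk (r : rat) (k : nat) : int := Num.floor (r * k%:R).

Definition Iring (m : nat) (r : rat) (k : nat) (L : {set {set pm m}})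
  : {set {set pm m}} :=
  [set b : {set pm m} | [&& #|b| == k,
                            b :&: negset b == set0 &
                            [forall l in L, r * k%:R < (#|b :&: l|%:R : rat)]]].

Definition Dfam (m : nat) (r : rat) (k : nat) (L : {set {set pm m}})
  : {set {set pm m}} :=
  [set d : {set pm m} | [exists l in L,
      (d \subset l) && ((#|d| : int) == (#|l| : int) - flrk r k)]].

Definition D0 (m : nat) (r : rat) (k : nat) (L : {set {set pm m}})
  : {set {set pm m}} :=
  [set d : {set pm m} | minset (fun e => e \in Dfam r k L) d].

Definition WD (m : nat) (D : {set {set pm m}}) : {set pm m} :=
  \bigcup_(d in D) d.

From HB Require Import structures.
From mathcomp Require Import all_boot all_order all_algebra zify.
Import Order.TTheory GRing.Theory Num.Theory.
Set Implicit Arguments. Unset Strict Implicit. Unset Printing Implicit Defensive.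

(* A k-set b is r-blocking for Lambda iff it meets every d in D_0: a subset d of lambda of
   size rho(lambda) - floor(rk) is missed by b exactly when rho(b /\ lambda) <= floor(rk),
   and it suffices to test the minimal such d.  Inclusion-exclusion over D in D_0 then
   reduces the count to the number of pair-free k-sets avoiding W = W_D.  Such a set is a
   choice of signs on k coordinates: a coordinate i with exactly one of +-i in W offers one
   sign and a coordinate with neither offers two; there are rho(W \/ -W) - rho(W) of the
   former and m - rho(W \/ -W)/2 of the latter.  The empty D gives binomial(m,k) 2^k. *)

Lemma card_draws_setU (I : finType) (H F : {set I}) a b :
  [disjoint H & F] ->
  #|[set S : {set I} | S \subset H :|: F & (#|S :&: H| == a) && (#|S :&: F| == b)]| =
  'C(#|H|, a) * 'C(#|F|, b).
Proof.
move=> HF.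
have capH (A B : {set I}) : A \subset H -> B \subset F -> (A :|: B) :&: H = A.
  move=> AH BF; rewrite setIUl (setIidPl AH) disjoint_setI0 ?setU0 //.
  by apply: (disjointWl BF); rewrite disjoint_sym.
have capF (A B : {set I}) : A \subset H -> B \subset F -> (A :|: B) :&: F = B.
  by move=> AH BF; rewrite setIUl (setIidPl BF) disjoint_setI0 ?set0U // (disjointWl AH).
pose draws (A : {set I}) n := [set S : {set I} | S \subset A & #|S| == n].
have -> : [set S : {set I} | S \subset H :|: F & (#|S :&: H| == a) && (#|S :&: F| == b)] =
    (fun p => p.1 :|: p.2) @: setX (draws H a) (draws F b).
  apply/setP => S; rewrite inE; apply/idP/imsetP => [|[[A B]]].
    case/andP=> SHF /andP[SH SF]; exists (S :&: H, S :&: F).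
      by rewrite !inE !subsetIr SH SF.
    by rewrite /= -setIUr (setIidPl SHF).
  rewrite !inE /= => /andP[/andP[AH cA] /andP[BF cB]] ->.
  by rewrite setUSS // capH // capF // cA cB.
rewrite card_in_imset ?cardsX ?cards_draws //.
move=> [A1 B1] [A2 B2]; rewrite !inE /= => /andP[/andP[A1H _] /andP[B1F _]].
move=> /andP[/andP[A2H _] /andP[B2F _]] E.
by congr pair; [rewrite -(capH _ _ A1H B1F) E capH | rewrite -(capF _ _ A1H B1F) E capF].
Qed.

Section WeightedDraws.
Variables (I : finType) (c : I -> nat).
Hypothesis c_le2 : forall i, c i <= 2.

Let H := [set i | c i == 1].
Let F := [set i | c i == 2].

Lemma disjoint_weights12 : [disjoint H & F].
Proof. by rewrite -setI_eq0; apply/eqP/setP => i; rewrite !inE; case: (c i) => [|[|]]. Qed.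

Lemma prod_weights (S : {set I}) :
  \prod_(i in S) c i = if S \subset H :|: F then 2 ^ #|S :&: F| else 0.
Proof.
case: ifP => [SHF | /negbT/subsetPn[i iS]].
  rewrite (big_setID F) /= (eq_bigr (fun=> 2)) => [|i]; last by rewrite !inE => /andP[_ /eqP].
  rewrite prod_nat_const big1 ?muln1 // => i; rewrite !inE => /andP[iF iS].
  by move: (subsetP SHF i iS) iF; rewrite !inE => /orP[/eqP|/eqP ->].
rewrite !inE (bigD1 i) //=; have := c_le2 i.
by case: (c i) => [|[|[|]]].
Qed.

Lemma sum_prod_weights k :
  \sum_(S : {set I} | #|S| == k) \prod_(i in S) c i =
  \sum_(j < k.+1) 'C(#|H|, j) * 'C(#|F|, k - j) * 2 ^ (k - j).
Proof.
have card_S (S : {set I}) : S \subset H :|: F -> #|S| = #|S :&: H| + #|S :&: F|.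
  move=> SHF; rewrite -{1}(setIidPl SHF) setIUr cardsU.
  have SHSF := disjointW (subsetIr S H) (subsetIr S F) disjoint_weights12.
  by rewrite (disjoint_setI0 SHSF) cards0 subn0.
rewrite (eq_bigr _ (fun S _ => prod_weights S)) -big_mkcondr /=.
rewrite (partition_big (fun S => inord #|S :&: H| : 'I_k.+1) predT) //=.
apply: eq_bigr => j _; rewrite -card_draws_setU ?disjoint_weights12 // -sum_nat_const.
apply: eq_big => [S | S /andP[/andP[/eqP cS SHF] /eqP jS]]; last first.
  have -> : nat_of_ord j = #|S :&: H| by rewrite -jS inordK // ltnS -cS (card_S S) // leq_addr.
  by rewrite -cS (card_S S) // addKn.
rewrite inE; case SHF: (S \subset H :|: F); rewrite ?andbF //= card_S //.
rewrite andbT; have jk := ltn_ord j.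
apply/andP/andP => [[/eqP cS /eqP <-]|[/eqP hS /eqP fS]].
  by rewrite inordK; lia.
split; first lia.
by apply/eqP/val_inj; rewrite /= inordK; lia.
Qed.

End WeightedDraws.

Lemma card_sum_mem (I : finType) (A : {set I}) : #|A| = \sum_i (i \in A).
Proof. by rewrite -sum1_card big_mkcond; apply: eq_bigr => i _; case: (i \in A). Qed.

Section SignedSets.
Variable m : nat.

Lemma in_negset (b : {set pm m}) x : (x \in negset b) = (negpm x \in b).
Proof.
have negpmK : involutive (@negpm m) by move=> [i s]; rewrite /negpm /= negbK.
by rewrite -[in LHS](negpmK x) (mem_imset _ _ (inv_inj negpmK)).
Qed.

(* A pair-free subset of +-[1,m] chooses at most one sign for each coordinate, so it is
   encoded by a partial sign function. *)
Definition signed_set (f : {ffun 'I_m -> option bool}) : {set pm m} :=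
  [set x | f x.1 == Some x.2].

Definition sign_supp (f : {ffun 'I_m -> option bool}) : {set 'I_m} :=
  [set i | f i != None].

Lemma signed_set_inj : injective signed_set.
Proof.
move=> f g /setP fg; apply/ffunP => i.
have fgi s : (f i == Some s) = (g i == Some s) by have := fg (i, s); rewrite !inE.
case: (f i) (g i) (fgi true) (fgi false) => [[]|] [[]|] //=.
Qed.

Lemma card_signed_set f : #|signed_set f| = #|sign_supp f|.
Proof.
have -> : signed_set f = (fun i => (i, odflt true (f i)) : pm m) @: sign_supp f.
  apply/setP => -[i s]; rewrite inE /=; apply/eqP/imsetP => [fi | [j]].
    by exists i; rewrite ?inE fi.
  by rewrite inE => + [-> ->]; case: (f j).
by apply: card_imset => i j /(congr1 fst).
Qed.

Lemma nopairP (b : {set pm m}) :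
  reflect (exists f, b = signed_set f) (b :&: negset b == set0).
Proof.
apply: (iffP eqP) => [nopair | [f ->]].
  exists [ffun i => if (i, true) \in b then Some true
                    else if (i, false) \in b then Some false else None].
  apply/setP => -[i s]; rewrite inE /= ffunE.
  have : (i, true) \notin b :&: negset b by rewrite nopair inE.
  rewrite inE in_negset /negpm /=.
  by case: s; case: ((i, true) \in b); case: ((i, false) \in b).
apply/setP => -[i s]; rewrite !inE in_negset /negpm /= !inE /=.
by case: (f i) => [[]|]; case: s.
Qed.

Definition avoiding (W : {set pm m}) (i : 'I_m) : {pred option bool} :=
  [pred o | if o is Some s then (i, s) \notin W else false].

Lemma pfamily_avoiding W (S : {set 'I_m}) f :
  (f \in pfamily None S (avoiding W)) = (sign_supp f == S) && [disjoint signed_set f & W].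
Proof.
apply/pfamilyP/andP => [[/subsetP supp_S ok] | [/eqP <- disj]].
  have fS i : (f i != None) = (i \in S).
    apply/idP/idP => [fi | iS]; first by apply: supp_S.
    by have := ok i iS; rewrite inE; case: (f i).
  split; first by apply/eqP/setP => i; rewrite inE fS.
  rewrite disjoints_subset; apply/subsetP => -[i s]; rewrite !inE /= => /eqP fi.
  have iS : i \in S by rewrite -fS fi.
  by have := ok i iS; rewrite inE fi.
split; first by apply/subsetP => i; rewrite !inE.
move=> i; rewrite !inE; case fi: (f i) => [s|] // _.
by rewrite (disjointFr disj) // inE fi.
Qed.

Lemma card_nopair_avoiding (W : {set pm m}) k :
  #|[set b : {set pm m} | [&& #|b| == k, b :&: negset b == set0 & [disjoint b & W]]]| =
  \sum_(S : {set 'I_m} | #|S| == k) \prod_(i in S) #|avoiding W i|.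
Proof.
have -> : [set b : {set pm m} | [&& #|b| == k, b :&: negset b == set0 & [disjoint b & W]]] =
    signed_set @: [set f | (#|sign_supp f| == k) && [disjoint signed_set f & W]].
  apply/setP => b; rewrite inE; apply/idP/imsetP => [/and3P[cb /nopairP[f bf] disj] | [f]].
    by exists f; rewrite // inE -card_signed_set -bf cb disj.
  rewrite inE => /andP[cf disj] ->; rewrite card_signed_set cf disj andbT.
  by apply/nopairP; exists f.
rewrite (card_imset _ signed_set_inj) -sum1dep_card.
rewrite (partition_big sign_supp (fun S => #|S| == k)) /= => [|f /andP[]//].
apply: eq_bigr => S /eqP cS; rewrite sum1dep_card.
transitivity #|pfamily None S (avoiding W)|; last by rewrite card_pfamily foldrE big_image.
apply: eq_card => f; rewrite inE pfamily_avoiding.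
by case: (sign_supp f =P S) => [->|]; rewrite ?cS ?eqxx ?andbF ?andbT.
Qed.

Lemma card_avoiding W i : #|avoiding W i| = ((i, true) \notin W) + ((i, false) \notin W).
Proof.
rewrite (@eq_card _ _ (Some @: [set s | (i, s) \notin W])); last first.
  move=> [s|]; rewrite !inE ?(mem_imset _ _ (@Some_inj _)) ?inE //.
  by apply/esym/imsetP => -[].
by rewrite card_imset; [rewrite -sum1dep_card big_mkcond big_bool | exact: Some_inj].
Qed.

Lemma card_pm (S : {set pm m}) :
  #|S| = \sum_(i < m) (((i, true) \in S) + ((i, false) \in S)).
Proof.
rewrite card_sum_mem.
transitivity (\sum_(p : 'I_m * bool) ((p.1, p.2) \in S : nat)); first by apply: eq_bigr => -[].
rewrite -(pair_bigA _ (fun i s => ((i, s) \in S : nat))).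
by apply: eq_bigr => i _; rewrite big_bool.
Qed.

Lemma card_setU_negset (W : {set pm m}) :
  #|W :|: negset W| = \sum_(i < m) 2 * (((i, true) \in W) || ((i, false) \in W)).
Proof.
rewrite card_pm; apply: eq_bigr => i _; rewrite !inE !in_negset /negpm /=.
by case: ((i, true) \in W); case: ((i, false) \in W).
Qed.

Lemma card_avoiding1 (W : {set pm m}) :
  #|[set i | #|avoiding W i| == 1]| = #|W :|: negset W| - #|W|.
Proof.
rewrite card_setU_negset (card_pm W) card_sum_mem.
rewrite [X in _ = X - _](eq_bigr (fun i => ((i, true) \in W) + ((i, false) \in W)
                                       + (i \in [set i | #|avoiding W i| == 1]))).
  by rewrite big_split addKn.
move=> i _; rewrite inE card_avoiding.
by case: ((i, true) \in W); case: ((i, false) \in W).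
Qed.

Lemma card_avoiding2 (W : {set pm m}) :
  #|[set i | #|avoiding W i| == 2]| = m - #|W :|: negset W| %/ 2.
Proof.
pose u := \sum_(i < m) (((i, true) \in W) || ((i, false) \in W)).
rewrite card_setU_negset -big_distrr mulKn // -/u card_sum_mem.
have partition_m : u + \sum_i (i \in [set i | #|avoiding W i| == 2]) = m.
  rewrite -big_split -[RHS]card_ord -sum1_card; apply: eq_bigr => i _.
  rewrite inE card_avoiding.
  by case: ((i, true) \in W); case: ((i, false) \in W).
apply/eqP; rewrite -(eqn_add2l u) subnKC ?partition_m //.
by rewrite -[X in _ <= X]partition_m leq_addr.
Qed.

End SignedSets.

Lemma card_nopair_avoiding_binomial (m : nat) (W : {set pm m}) k :
  #|[set b : {set pm m} | [&& #|b| == k, b :&: negset b == set0 & [disjoint b & W]]]| =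
  \sum_(j < k.+1) 'C(#|W :|: negset W| - #|W|, j)
                  * 'C(m - #|W :|: negset W| %/ 2, k - j) * 2 ^ (k - j).
Proof.
rewrite card_nopair_avoiding sum_prod_weights ?card_avoiding1 ?card_avoiding2 // => i.
by rewrite card_avoiding; case: ((i, true) \in W); case: ((i, false) \in W).
Qed.

Local Open Scope ring_scope.

Lemma sum_powerset_sign (T : finType) (S : {set T}) :
  \sum_(D in powerset S) (-1 : int) ^+ #|D| = (S == set0)%:R.
Proof.
have [->|[x xS]] := set_0Vmem S; first by rewrite powerset0 big_set1 cards0 eqxx.
have /negbTE -> : S != set0 by apply/set0Pn; exists x.
pose flip (D : {set T}) := if x \in D then D :\ x else x |: D.
have flipK : involutive flip.
  move=> D; rewrite /flip; have [xD|xD] := boolP (x \in D).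
    by rewrite setD11 setD1K.
  by rewrite setU11 setU1K.
have flip_sub D : (flip D \in powerset S) = (D \in powerset S).
  rewrite !powersetE /flip; case: ifP => xD.
    by rewrite -{2}(setD1K xD) subUset sub1set xS.
  by rewrite subUset sub1set xS.
have flip_sign D : (-1 : int) ^+ #|flip D| = - (-1) ^+ #|D|.
  rewrite /flip; case: ifP => xD.
    by rewrite (cardsD1 x D) xD add1n exprS mulN1r opprK.
  by rewrite cardsU1 xD add1n exprS mulN1r.
suff /eqP : \sum_(D in powerset S) (-1 : int) ^+ #|D| = - \sum_(D in powerset S) (-1) ^+ #|D|.
  by rewrite -addr_eq0 -mulr2n mulrn_eq0 => /eqP.
rewrite {1}(reindex_inj (inv_inj flipK)) /= (eq_bigl _ _ flip_sub).
by rewrite -sumrN (eq_bigr _ (fun D _ => flip_sign D)).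
Qed.

Lemma card_meeting_all (T : finType) (B F : {set {set T}}) :
  (#|[set b in B | [forall d in F, ~~ [disjoint b & d]]]| : int) =
  \sum_(D in powerset F)
     (-1) ^+ #|D| * #|[set b in B | [disjoint b & \bigcup_(d in D) d]]|%:Z.
Proof.
have indicator (b : {set T}) : [forall d in F, ~~ [disjoint b & d]]%:R =
    \sum_(D in powerset F) (-1 : int) ^+ #|D| * [disjoint b & \bigcup_(d in D) d]%:R.
  have -> : [forall d in F, ~~ [disjoint b & d]] = ([set d in F | [disjoint b & d]] == set0).
    apply/forall_inP/eqP => [meet|/setP empty d dF].
      by apply/setP => d; rewrite !inE; apply/andP => -[/meet/negP].
    by apply/negP => bd; have := empty d; rewrite !inE dF bd.
  rewrite -sum_powerset_sign [RHS](eq_bigr (fun D : {set {set T}} =>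
      if [disjoint b & \bigcup_(d in D) d] then (-1 : int) ^+ #|D| else 0)); last first.
    by move=> D _; case: ifP; rewrite ?mulr1 ?mulr0.
  rewrite -big_mkcondr; apply: eq_bigl => D; rewrite !powersetE.
  apply/subsetP/andP => [sub|[/subsetP sub /bigcup_disjointP disj] d dD].
    split; first by apply/subsetP => d /sub; rewrite inE => /andP[].
    by apply/bigcup_disjointP => d /sub; rewrite inE => /andP[].
  by rewrite inE sub //=; apply: disj.
have card_sum (P : pred {set T}) : (#|[set b in B | P b]| : int) = \sum_(b in B) (P b)%:R.
  rewrite -sum1dep_card -natz natr_sum big_mkcondr /=.
  by apply: eq_bigr => b _; case: (P b).
rewrite card_sum (eq_bigr _ (fun b _ => indicator b)) exchange_big /=.
by apply: eq_bigr => D _; rewrite card_sum mulr_sumr.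
Qed.

Section Blocking.
Variables (m : nat) (r : rat) (k : nat) (L : {set {set pm m}}).
Hypothesis floor_le_card : forall l, l \in L -> flrk r k <= #|l|.

Lemma flrk_lt_card (c : nat) : (flrk r k < c%:Z) = (r * k%:R < c%:R).
Proof. by rewrite /flrk floor_lt_int. Qed.

Definition blocking (b : {set pm m}) :=
  [forall l in L, r * k%:R < (#|b :&: l|%:R : rat)].

Lemma blocking_meets_Dfam b d : blocking b -> d \in Dfam r k L -> ~~ [disjoint b & d].
Proof.
move=> /forall_inP block; rewrite inE => /exists_inP[l lL /andP[dl /eqP card_d]].
apply/negP => bd; have := block l lL; rewrite -flrk_lt_card.
have : (#|b :&: l| <= #|l :\: d|)%N.
  apply/subset_leq_card/subsetP => x; rewrite !inE => /andP[xb ->].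
  by rewrite andbT; apply: contraTN xb => xd; rewrite (disjointFl bd xd).
rewrite cardsD (setIidPr dl).
have := subset_leq_card dl.
lia.
Qed.

Lemma nonblocking_misses_D0 b :
  ~~ blocking b -> exists2 d, d \in D0 r k L & [disjoint b & d].
Proof.
move=> /forall_inPn[l lL]; rewrite -flrk_lt_card -leNgt => small.
have [n En] : exists n : nat, n%:Z = #|l|%:Z - flrk r k.
  exists `|#|l|%:Z - flrk r k|%N; rewrite abszE ger0_norm //.
  by rewrite subr_ge0 floor_le_card.
have : (n <= #|l :\: b|)%N by rewrite cardsD setIC; have := subset_leq_card (subsetIl l b); lia.
rewrite -bin_gt0 -cards_draws => /card_gt0P[d]; rewrite inE => /andP[d_lb /eqP card_d].
have d_lb' := subset_trans d_lb (subsetDl l b).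
have dF : d \in Dfam r k L.
  by rewrite inE; apply/exists_inP; exists l; rewrite // d_lb' card_d En eqxx.
have [d' d'_min d'd] := minset_exists dF.
exists d'; first by rewrite inE.
apply: disjointWr (subset_trans d'd d_lb) _.
by rewrite disjoint_sym disjoints_subset setDE subsetIr.
Qed.

Lemma blockingE b : blocking b = [forall d in D0 r k L, ~~ [disjoint b & d]].
Proof.
apply/idP/forall_inP => [block d | meet].
  by rewrite inE => /minsetP[dF _]; apply: blocking_meets_Dfam.
apply: contraT => /nonblocking_misses_D0[d dD0 bd].
by have := meet d dD0; rewrite bd.
Qed.

End Blocking.

Theorem mainTheorem4 (m : nat) (r : rat) (k : nat) (L : {set {set pm m}})
  (hm : (1 <= m)%N) (hr0 : 0 <= r) (hr1 : r < 1)
  (hk1 : (1 <= k)%N) (hkm : (k <= m)%N)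
  (hL : antichain L)
  (hmin : forall l, l \in L -> flrk r k + 1 <= (#|l| : int)) :
  (#|Iring r k L| : int) =
    ('C(m, k) * 2 ^ k)%N%:Z +
    \sum_(D in powerset (D0 r k L) | D != set0)
       (-1) ^+ #|D| *
       \sum_(j < k.+1)
         ('C(#|WD D :|: negset (WD D)| - #|WD D|, j)
          * 'C(m - #|WD D :|: negset (WD D)| %/ 2, k - j)
          * 2 ^ (k - j))%N%:Z.
Proof.
pose pairfree := [set b : {set pm m} | (#|b| == k) && (b :&: negset b == set0)].
have floor_le_card l : l \in L -> flrk r k <= #|l| by move/hmin; lia.
have -> : Iring r k L = [set b in pairfree | [forall d in D0 r k L, ~~ [disjoint b & d]]].
  by apply/setP => b; rewrite !inE andbA -blockingE.
rewrite card_meeting_all (bigD1 set0) ?powersetE ?sub0set //=.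
have card_term (D : {set {set pm m}}) :
    #|[set b in pairfree | [disjoint b & \bigcup_(d in D) d]]| =
    #|[set b : {set pm m} | [&& #|b| == k, b :&: negset b == set0 & [disjoint b & WD D]]]|.
  by apply: eq_card => b; rewrite !inE andbA.
congr (_ + _).
  rewrite card_term card_nopair_avoiding_binomial /WD big_set0 /negset imset0 setU0 cards0.
  rewrite big_ord_recl big1 => [|j _]; last by rewrite bin0n mul0n.
  by rewrite /= cards0 expr0 mul1r subnn div0n !subn0 bin0 mul1n addn0.
apply: eq_bigr => D _; rewrite card_term card_nopair_avoiding_binomial -natz natr_sum.
by under eq_bigr do rewrite natz.
Qed.
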